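(* Let $G$ be a multi-hypergraph all of whose edges have size 1 (loops) or size 2, such that each vertex has at most one loop (while 2-edges may have arbitrary multiplicity). Then $\operatorname{ex}(G,\mathcal{D})\geq\frac{2}{3}e(G)$.
   Context: The dumbbell $\mathcal{D}$ is the hypergraph on two vertices $u,v$ with edges $\{u,v\},\{u\},\{v\}$. A copy of $\mathcal{D}$ in $G$ is a sub-multihypergraph isomorphic to $\mathcal{D}$ (preserving edge sizes). $e(G)$ counts all edges (loops and 2-edges) with multiplicity, and $\operatorname{ex}(G,\mathcal{D})$ is the maximum number of edges (with multiplicity) of a sub-multihypergraph of $G$ containing no copy of $\mathcal{D}$. *)

From mathcomp Require Import all_boot.
Set Implicit Arguments. Unset Strict Implicit. Unset Printing Implicit Defensive.

(* A multi-hypergraph on vertex set V: a finite type E of edge labels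
   (so edges may repeat), each edge e having vertex set [ends e]. *)

Definition loops_and_2edges (V E : finType) (ends : E -> {set V}) : Prop :=
  forall e : E, (#|ends e| == 1) || (#|ends e| == 2).

Definition at_most_one_loop (V E : finType) (ends : E -> {set V}) : Prop :=
  forall e f : E, #|ends e| = 1 -> ends e = ends f -> e = f.

Definition dumbbell_free (V E : finType) (ends : E -> {set V}) (S : {set E}) : bool :=
  ~~ [exists u : V, exists v : V, (u != v) &&
       [exists e1 in S, exists e2 in S, exists e3 in S,
          [&& ends e1 == [set u; v], ends e2 == [set u] & ends e3 == [set v]]]].

Definition ex_dumbbell (V E : finType) (ends : E -> {set V}) : nat :=
  \max_(S : {set E} | dumbbell_free ends S) #|S|.

From mathcomp Require Import all_boot.
From mathcomp Require Import zify.
Set Implicit Arguments. Unset Strict Implicit. Unset Printing Implicit Defensive.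

(* While the current edge set F contains a dumbbell with
   2-edge uv and loops l_u, l_v, remove a set B of edges from F and keep a
   subset K of B, with |K| >= 2/3 |B|, such that adding K to any dumbbell-free
   subset of F \ B creates no dumbbell.  If u lies on at least two 2-edges of F,
   take B = {l_u} + (2-edges at u) and K = (2-edges at u): a new dumbbell would
   need a loop at u, and l_u is the only one.  Otherwise take B = {l_u, uv, l_v}
   and K = {l_u, uv}: a new dumbbell would need a 2-edge at u, i.e. uv, and
   hence the loop l_v. *)

Section Greedy.
Variables (T : finType) (P : pred {set T}) (a b : nat).

Definition greedy_step (F B K : {set T}) :=
  [/\ K \subset B, B \subset F, B != set0, a * #|B| <= b * #|K|
    & forall S : {set T}, S \subset F :\: B -> P S -> P (S :|: K)].

Lemma greedy_subset :
  a <= b -> (forall F : {set T}, ~~ P F -> exists B K, greedy_step F B K) ->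
  forall F : {set T}, exists S : {set T}, [/\ S \subset F, P S & a * #|F| <= b * #|S|].
Proof.
move=> le_ab step F; have [n] := ubnP #|F|; elim: n F => // n IH F /ltnSE leFn.
have [PF | nPF] := boolP (P F); first by exists F; rewrite leq_mul2r le_ab orbT.
have [B [K [sKB sBF nzB le_BK extend]]] := step F nPF.
have cardFB : #|F :&: B| + #|F :\: B| = #|F| := cardsID B F.
rewrite (setIidPr sBF) in cardFB.
have [|S' [sS'FB PS' le_S']] := IH (F :\: B).
  by move: nzB; rewrite -card_gt0; lia.
have /andP[sS'F dS'B] : (S' \subset F) && [disjoint S' & B] by rewrite -subsetD.
exists (S' :|: K); split.
- by rewrite subUset sS'F (subset_trans sKB sBF).
- exact: extend.
- rewrite cardsU (disjoint_setI0 (disjointWr sKB dS'B)) cards0 subn0; lia.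
Qed.

End Greedy.

Section Dumbbell.
Variables (V E : finType) (ends : E -> {set V}).

Definition is_dumbbell (S : {set E}) (u v : V) (e1 e2 e3 : E) :=
  [/\ u != v, e1 \in S, e2 \in S, e3 \in S
    & [/\ ends e1 = [set u; v], ends e2 = [set u] & ends e3 = [set v]]].

Lemma dumbbellP S :
  reflect (exists u v e1 e2 e3, is_dumbbell S u v e1 e2 e3)
          (~~ dumbbell_free ends S).
Proof.
rewrite negbK; apply: (iffP idP).
- case/existsP=> u /existsP[v /andP[uv /existsP[e1 /andP[S1 /existsP[e2 /andP[S2
    /existsP[e3 /andP[S3 /and3P[/eqP ? /eqP ? /eqP ?]]]]]]]]].
  by exists u, v, e1, e2, e3.
- case=> u [v [e1 [e2 [e3 [uv S1 S2 S3 [E1 E2 E3]]]]]].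
  apply/existsP; exists u; apply/existsP; exists v; rewrite uv.
  apply/existsP; exists e1; rewrite S1; apply/existsP; exists e2; rewrite S2.
  by apply/existsP; exists e3; rewrite S3 E1 E2 E3 !eqxx.
Qed.

Lemma is_dumbbell_sym S u v e1 e2 e3 :
  is_dumbbell S u v e1 e2 e3 -> is_dumbbell S v u e1 e3 e2.
Proof. by case=> uv S1 S2 S3 [E1 E2 E3]; split; rewrite 1?eq_sym // E1 setUC. Qed.

Lemma dumbbell_setU_at (S K : {set E}) u :
  dumbbell_free ends S -> {in K, forall e, u \in ends e} ->
  ~~ dumbbell_free ends (S :|: K) ->
  exists v e1 e2 e3, is_dumbbell (S :|: K) u v e1 e2 e3.
Proof.
move=> freeS Ku /dumbbellP[x [y [e1 [e2 [e3 D]]]]].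
have [uv S1 S2 S3 [E1 E2 E3]] := D.
have [/set2P[->|->] | uxy] := boolP (u \in [set x; y]).
- by exists y, e1, e2, e3.
- by exists x, e1, e3, e2; apply: is_dumbbell_sym.
have inS e : e \in S :|: K -> ends e \subset [set x; y] -> e \in S.
  case/setUP=> // /Ku ue /subsetP/(_ u ue) uxy'.
  by rewrite uxy' in uxy.
case/dumbbellP: freeS; exists x, y, e1, e2, e3; split=> //.
- by rewrite inS ?E1.
- by rewrite inS // E2 sub1set set21.
- by rewrite inS // E3 sub1set set22.
Qed.

Hypothesis one_loop : at_most_one_loop ends.

Lemma loop_eq f g x : ends f = [set x] -> ends g = [set x] -> f = g.
Proof. by move=> Ef Eg; apply: one_loop; rewrite ?Ef ?Eg ?cards1. Qed.

Definition edges2_at (F : {set E}) u :=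
  [set e in F | (u \in ends e) && (#|ends e| == 2)].

Lemma greedy_step_many F u v e1 e2 e3 :
  is_dumbbell F u v e1 e2 e3 -> 1 < #|edges2_at F u| ->
  greedy_step (dumbbell_free ends) 2 3 F (e2 |: edges2_at F u) (edges2_at F u).
Proof.
case=> _ _ F2 _ [_ E2 _] many.
have e2K : e2 \notin edges2_at F u by rewrite inE E2 cards1 !andbF.
split.
- exact: subsetUr.
- by rewrite subUset sub1set F2; apply/subsetP=> e; rewrite inE => /andP[].
- by apply/set0Pn; exists e2; rewrite setU11.
- by rewrite cardsU1 e2K add1n; lia.
move=> S; rewrite subsetD => /andP[_ dSB] freeS.
have Ku : {in edges2_at F u, forall e, u \in ends e}.
  by move=> e; rewrite inE => /and3P[].
apply: contraT => /(dumbbell_setU_at freeS Ku)[y [f1 [f2 [f3 [_ _ Sf2 _ [_ Ef2 _]]]]]].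
move: Sf2; rewrite -(loop_eq E2 Ef2) => /setUP[Se2 | Ke2]; last by rewrite Ke2 in e2K.
by have := disjointFr dSB Se2; rewrite setU11.
Qed.

Lemma greedy_step_one F u v e1 e2 e3 :
  is_dumbbell F u v e1 e2 e3 -> #|edges2_at F u| <= 1 ->
  greedy_step (dumbbell_free ends) 2 3 F [set e2; e1; e3] [set e2; e1].
Proof.
case=> uv F1 F2 F3 [E1 E2 E3] one.
have e21 : e2 != e1.
  by apply: contra_neq uv => e21; have := set22 u v; rewrite -E1 -e21 E2 => /set1P.
have only_e1 f : f \in F -> u \in ends f -> #|ends f| = 2 -> f = e1.
  have e1E : e1 \in edges2_at F u by rewrite inE F1 E1 set21 cards2 uv.
  by move=> Ff uf cf; apply: (card_le1_eqP one) => //; rewrite inE Ff uf cf eqxx.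
have sBF : [set e2; e1; e3] \subset F by rewrite !subUset !sub1set F1 F2 F3.
split=> //.
- exact: subsetUl.
- by apply/set0Pn; exists e2; rewrite !inE eqxx.
- by rewrite cardsU cards2 e21 cards1; lia.
move=> S; rewrite subsetD => /andP[sSF dSB] freeS.
have Ku : {in [set e2; e1], forall e, u \in ends e}.
  by move=> e /set2P[->|->]; rewrite ?E2 ?E1 ?set11 ?set21.
apply: contraT => /(dumbbell_setU_at freeS Ku)[y [f1 [f2 [f3 D]]]].
have [uy Sf1 _ Sf3 [Ef1 _ Ef3]] := D.
have f1e1 : f1 = e1.
  apply: only_e1; rewrite ?Ef1 ?set21 ?cards2 ?uy //.
  by move: Sf1; apply/subsetP; rewrite subUset sSF (subset_trans _ sBF) ?subsetUl.
have yv : y = v.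
  have : y \in ends e1 by rewrite -f1e1 Ef1 set22.
  by rewrite E1 => /set2P[yu|//]; rewrite yu eqxx in uy.
move: Sf3; rewrite yv in Ef3; rewrite -(loop_eq E3 Ef3) => /setUP[Se3|].
  by have := disjointFr dSB Se3; rewrite !inE eqxx orbT.
case/set2P=> [e32|e31].
  by have := set11 v; rewrite -E3 e32 E2 => /set1P vu; rewrite vu eqxx in uv.
by have := cards2 u v; rewrite uv -E1 -e31 E3 cards1.
Qed.

Lemma dumbbell_greedy_step F :
  ~~ dumbbell_free ends F -> exists B K, greedy_step (dumbbell_free ends) 2 3 F B K.
Proof.
case/dumbbellP=> u [v [e1 [e2 [e3 D]]]].
have [many | one] := ltnP 1 #|edges2_at F u|.
- by do 2!eexists; exact: greedy_step_many D many.
- by do 2!eexists; exact: greedy_step_one D one.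
Qed.

End Dumbbell.

Theorem theorem4p4 (V E : finType) (ends : E -> {set V}) :
  loops_and_2edges ends -> at_most_one_loop ends ->
  2 * #|E| <= 3 * ex_dumbbell ends.
Proof.
(* Edges of size other than 1 and 2 never lie in a dumbbell. *)
move=> _ one_loop.
have [S [_ freeS le_ES]] :=
  greedy_subset (isT : 2 <= 3) (dumbbell_greedy_step one_loop) [set: E].
rewrite cardsT in le_ES; apply: leq_trans le_ES _; rewrite leq_mul2l /=.
exact: (leq_bigmax_cond S freeS).
Qed.
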